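(* Let $H$ be a real or complex Hilbert space of dimension $n$, let $N\ge \max(n,2)$, let $F=\{f_i\}_{i=1}^N$ be a frame for $H$, and let $\{q_i\}_{i=1}^N$ be a weight number sequence. Let $G=\{g_i\}_{i=1}^N$ be a dual of $F$ satisfying: (i) $\langle g_i,f_i\rangle\ge 0$ for all $1\le i\le N$; (ii) there is a constant $c>0$ with $q_iq_j\langle g_j,f_i\rangle\langle g_i,f_j\rangle=c$ for all $i\ne j$. Let $\zeta=\{i: q_i\langle g_i,f_i\rangle=\mathcal{R}_1^p(F,G)\}$. If $|\zeta|=1$, then $$\mathcal{R}_2^p(F,G)=\frac12\Big\{\mathcal{R}_1^p(F,G)+\max_{i\notin\zeta}q_i\langle g_i,f_i\rangle+\sqrt{\big(\mathcal{R}_1^p(F,G)-\max_{i\notin\zeta}q_i\langle g_i,f_i\rangle\big)^2+4c}\Big\}.$$ If $|\zeta|>1$, then $\mathcal{R}_2^p(F,G)=\mathcal{R}_1^p(F,G)+\sqrt{c}$.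
   Context: Inner products are linear in the first argument. A frame for $H$ is a finite sequence spanning $H$. Analysis operator: $\Theta_F f=(\langle f,f_i\rangle)_i$. Synthesis operator: $\Theta_G^*(c)=\sum_i c_ig_i$. A dual of $F$ is a frame $G$ with $f=\sum_i\langle f,f_i\rangle g_i=\sum_i\langle f,g_i\rangle f_i$ for all $f$. A probability sequence satisfies $0\le p_i\le 1$ and $\sum p_i=1$. Weight numbers: $q_i=\frac{\sum_j p_j}{\sum_j p_j-p_i}\cdot\frac{N-1}{n}$ (assumed well defined). For $m\in\{1,2\}$, $\mathcal{D}_m^p$ is the set of $N\times N$ diagonal matrices $D$ for which there is $\Lambda\subseteq\{1,\dots,N\}$ with $|\Lambda|=m$, $D_{ii}=q_i$ for $i\in\Lambda$ and $D_{ii}=0$ otherwise. $\mathcal{R}_m^p(F,G)=\max\{\rho(\Theta_G^*D\Theta_F):D\in\mathcal{D}_m^p\}$, with $\rho$ the spectral radius. *)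

From HB Require Import structures.
From mathcomp Require Import all_boot all_order all_algebra.
Set Implicit Arguments. Unset Strict Implicit. Unset Printing Implicit Defensive.
Import Order.TTheory GRing.Theory Num.Theory.
Local Open Scope ring_scope.

(* H is modelled as C^n (column vectors 'cV[C]_n) over an
   arbitrary numeric algebraically closed field C (e.g. algC), with the
   standard inner product, linear in the first argument. *)

Section FrameDefs.
Variable C : numClosedFieldType.

Definition inner n (x y : 'cV[C]_n) : C := \sum_k x k 0 * (y k 0)^*.

Definition is_frame n N (f : 'I_N -> 'cV[C]_n) : Prop :=
  forall x : 'cV[C]_n, exists a : 'I_N -> C, x = \sum_i a i *: f i.

Definition is_dual n N (f g : 'I_N -> 'cV[C]_n) : Prop :=
  is_frame g /\
  forall x : 'cV[C]_n,
    x = \sum_i inner x (f i) *: g i /\ x = \sum_i inner x (g i) *: f i.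

Definition is_prob_seq N (p : 'I_N -> C) : Prop :=
  (forall i, 0 <= p i <= 1) /\ \sum_i p i = 1.

Definition weight n N (p : 'I_N -> C) (i : 'I_N) : C :=
  (\sum_j p j) / (\sum_j p j - p i) * ((N.-1)%:R / n%:R).

(* analysis operator Theta_F : H -> C^N, (Theta_F x)_i = <x, f_i> *)
Definition analysis n N (f : 'I_N -> 'cV[C]_n) : 'M[C]_(N, n) :=
  \matrix_(i, k) (f i k 0)^*.

(* synthesis operator Theta_G^* : C^N -> H, c |-> sum_i c_i g_i *)
Definition synthesis n N (g : 'I_N -> 'cV[C]_n) : 'M[C]_(n, N) :=
  \matrix_(k, i) g i k 0.

Definition eigen_seq n (A : 'M[C]_n) : seq C :=
  sval (closed_field_poly_normal (char_poly A)).

Definition spec_rad n (A : 'M[C]_n) : C :=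
  \big[Num.max/0]_(z <- eigen_seq A) `|z|.

Definition diagD N (q : 'I_N -> C) (L : {set 'I_N}) : 'M[C]_N :=
  diag_mx (\row_i (if i \in L then q i else 0)).

Definition Rmp n N (p : 'I_N -> C) (m : nat) (f g : 'I_N -> 'cV[C]_n) : C :=
  \big[Num.max/0]_(L : {set 'I_N} | #|L| == m)
     spec_rad (synthesis g *m diagD (weight n p) L *m analysis f).

End FrameDefs.

(* The nonzero eigenvalues of Theta_G^* D_L Theta_F = sum_(k in L) q_k g_k f_k^*
   are those of the |L| x |L| matrix (q_k <g_m, f_k>)_(m, k in L), as seen on
   left eigenvectors v through u_k = v g_k.  For L = {i} this is the number
   x_i = q_i <g_i, f_i> >= 0, so R_1 = max_i x_i.  For L = {i, j} hypothesis (ii)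
   makes the characteristic polynomial (z - x_i)(z - x_j) - c, whose larger root
   pair_rad c x_i x_j bounds the modulus of the other one and is nondecreasing in
   x_i and x_j; so R_2 is pair_rad evaluated at the two largest x_i. *)

From HB Require Import structures.
From mathcomp Require Import all_boot all_order all_algebra.
From mathcomp Require Import ring.
Import Order.TTheory GRing.Theory Num.Theory.
Set Implicit Arguments.
Unset Strict Implicit.
Unset Printing Implicit Defensive.
Local Open Scope ring_scope.

Section BigmaxNonneg.
Variables (R : numDomainType) (I : eqType) (P : pred I) (F : I -> R).
Hypothesis F_ge0 : forall i, P i -> 0 <= F i.

Lemma bigmax_ge0 r : 0 <= \big[Num.max/0]_(i <- r | P i) F i.
Proof. by elim/big_ind: _ => // x y x0 y0; rewrite maxEle; case: ifP. Qed.

Lemma le_bigmax_nneg r i : i \in r -> P i -> F i <= \big[Num.max/0]_(j <- r | P j) F j.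
Proof.
elim: r => // a s IHs; rewrite inE big_cons => /predU1P [-> Pi | si Pi].
  by rewrite Pi maxEle; case: ifP => [-> | _].
case: ifP => Pa; last exact: IHs.
have Fi_le := IHs si Pi; rewrite maxEle; case: ifPn => // Fa_gt.
rewrite -real_ltNge ?ger0_real ?F_ge0 ?bigmax_ge0 // in Fa_gt.
exact: le_trans Fi_le (ltW Fa_gt).
Qed.

Lemma bigmax_nneg_attained r i0 : i0 \in r -> P i0 ->
  exists2 i, P i & \big[Num.max/0]_(j <- r | P j) F j = F i.
Proof.
move=> ri0 Pi0; have [M0 | //] :
    \big[Num.max/0]_(j <- r | P j) F j = 0 \/
    exists2 i, P i & \big[Num.max/0]_(j <- r | P j) F j = F i.
  elim/big_ind: _ => [|x y Hx Hy|i Pi]; [by left | | by right; exists i].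
  by rewrite maxEle; case: ifP.
exists i0 => //; apply/eqP; rewrite M0 eq_le F_ge0 //= -M0.
exact: le_bigmax_nneg.
Qed.

End BigmaxNonneg.

Section SpectralRadius.
Variables (C : numClosedFieldType) (n : nat) (A : 'M[C]_n).

Lemma mem_eigen_seq z : (z \in eigen_seq A) = eigenvalue A z.
Proof.
rewrite eigenvalue_root_char /eigen_seq.
case: closed_field_poly_normal => /= r ->.
by rewrite (monicP (char_poly_monic A)) scale1r root_prod_XsubC.
Qed.

Lemma spec_rad_ge0 : 0 <= spec_rad A.
Proof. by apply: bigmax_ge0 => z _; apply: normr_ge0. Qed.

Lemma norm_eigenvalue_le_spec_rad z : eigenvalue A z -> `|z| <= spec_rad A.
Proof.
by rewrite -mem_eigen_seq => Az; apply: le_bigmax_nneg => // w _; apply: normr_ge0.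
Qed.

Lemma spec_radE r : 0 <= r -> (r != 0 -> eigenvalue A r) ->
  (forall z, eigenvalue A z -> z != 0 -> `|z| <= r) -> spec_rad A = r.
Proof.
move=> r_ge0 Ar r_max; apply/eqP; rewrite eq_le; apply/andP; split.
  rewrite /spec_rad big_seq; apply: bigmax_le => // z; rewrite mem_eigen_seq => Az.
  by have [-> | /(r_max z Az) //] := eqVneq z 0; rewrite normr0.
have [-> | /Ar Ar'] := eqVneq r 0; first exact: spec_rad_ge0.
by rewrite -[X in X <= _]ger0_norm //; apply: norm_eigenvalue_le_spec_rad.
Qed.

End SpectralRadius.

Section FrameOperator.
Variables (C : numClosedFieldType) (n N : nat) (q : 'I_N -> C) (f g : 'I_N -> 'cV[C]_n).

Definition frame_op (L : {set 'I_N}) : 'M[C]_n :=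
  synthesis g *m diagD q L *m analysis f.

Lemma row_mul_frame_op L (v : 'rV[C]_n) :
  v *m frame_op L = \row_b \sum_(k in L) q k * (v *m g k) 0 0 * (f k b 0)^*.
Proof.
apply/rowP => b; rewrite /frame_op /diagD mul_mx_diag !mxE.
under eq_bigr do rewrite !mxE big_distrr /=.
rewrite exchange_big /= [RHS]big_mkcond /=; apply: eq_bigr => k _.
case: ifP => kL; last by apply: big1 => a _; rewrite !mxE kL mulr0 mul0r mulr0.
rewrite [(v *m g k) 0 0]mxE mulr_sumr mulr_suml.
by apply: eq_bigr => a _; rewrite !mxE kL; ring.
Qed.

Lemma row_mul_synth (L : {set 'I_N}) (w : 'I_N -> C) m :
  ((\row_b \sum_(k in L) w k * (f k b 0)^*) *m g m) 0 0 =
  \sum_(k in L) w k * inner (g m) (f k).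
Proof.
rewrite mxE /inner; under eq_bigr do rewrite mxE mulr_suml.
rewrite exchange_big /=; apply: eq_bigr => k _.
by rewrite mulr_sumr; apply: eq_bigr => b _; ring.
Qed.

Lemma frame_op_eigenvalueP (L : {set 'I_N}) (lam : C) : lam != 0 ->
  eigenvalue (frame_op L) lam <->
  exists2 u : 'I_N -> C, exists2 m, m \in L & u m != 0 &
    forall m, m \in L -> lam * u m = \sum_(k in L) q k * u k * inner (g m) (f k).
Proof.
move=> lam0; split.
  case/eigenvalueP => v vT v0; exists (fun k => (v *m g k) 0 0).
    apply/exists_inP; apply: contraNT v0; rewrite negb_exists_in => /forall_inP u0.
    have : lam *: v == 0.
      rewrite -vT row_mul_frame_op; apply/eqP/rowP => b; rewrite !mxE big1 // => k kL.
      by move/negPn/eqP: (u0 k kL) => ->; rewrite mulr0 mul0r.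
    by rewrite scaler_eq0 (negPf lam0).
  move=> m _; have := congr1 (fun w => (w *m g m) 0 0) vT.
  by rewrite /= row_mul_frame_op row_mul_synth -scalemxAl mxE => <-.
case=> u [m0 m0L um0] u_eig.
pose v := \row_b \sum_(k in L) (q k * u k) * (f k b 0)^*.
have vg m : m \in L -> (v *m g m) 0 0 = lam * u m.
  by move=> mL; rewrite row_mul_synth u_eig.
apply/eigenvalueP; exists v.
  rewrite row_mul_frame_op; apply/rowP => b; rewrite !mxE mulr_sumr.
  by apply: eq_bigr => k kL; rewrite vg //; ring.
apply: contraNneq (mulf_neq0 lam0 um0) => v0.
by rewrite -vg // v0 mul0mx mxE.
Qed.

End FrameOperator.

Section PairRadius.
Variables (C : numClosedFieldType) (c : C).
Hypothesis c_ge0 : 0 <= c.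

Definition pair_rad (x y : C) : C :=
  2^-1 * (x + y + sqrtC ((x - y) ^+ 2 + 4%:R * c)).

Lemma pair_radC (x y : C) : pair_rad x y = pair_rad y x.
Proof. by rewrite /pair_rad (addrC x) -sqrrN opprB. Qed.

Lemma pair_rad_factor (x y lam : C) :
  (lam - pair_rad x y) * (lam - (x + y - pair_rad x y)) = (lam - x) * (lam - y) - c.
Proof.
rewrite /pair_rad; set S := sqrtC _.
have S2 : S ^+ 2 = (x - y) ^+ 2 + 4%:R * c by rewrite sqrtCK.
have -> : (lam - 2^-1 * (x + y + S)) * (lam - (x + y - 2^-1 * (x + y + S))) =
          (lam - x) * (lam - y) - c + 4%:R^-1 * ((x - y) ^+ 2 + 4%:R * c - S ^+ 2).
  by field.
by rewrite S2 subrr mulr0 addr0.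
Qed.

Lemma pair_rad_root (x y : C) : (pair_rad x y - x) * (pair_rad x y - y) = c.
Proof.
apply/eqP; rewrite -subr_eq0 -pair_rad_factor.
by rewrite subrr mul0r.
Qed.

Lemma ler_pair_rad_l (x y : C) : x \is Num.real -> y \is Num.real -> x <= pair_rad x y.
Proof.
move=> xR yR; have xyR : x - y \is Num.real by rewrite rpredB.
have sq_ge0 : 0 <= (x - y) ^+ 2 by rewrite -real_normK // exprn_ge0.
have disc_ge : `|x - y| <= sqrtC ((x - y) ^+ 2 + 4%:R * c).
  rewrite -(sqrCK (normr_ge0 (x - y))) real_normK //.
  have c4_ge0 : 0 <= 4%:R * c by rewrite mulr_ge0 ?ler0n.
  by rewrite ler_sqrtC ?nnegrE ?addr_ge0 // lerDl.
have : x - y <= sqrtC ((x - y) ^+ 2 + 4%:R * c) by apply: le_trans (real_ler_norm xyR) _.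
rewrite /pair_rad -subr_ge0 => h; rewrite -subr_ge0.
have -> : 2^-1 * (x + y + sqrtC ((x - y) ^+ 2 + 4%:R * c)) - x =
          2^-1 * (sqrtC ((x - y) ^+ 2 + 4%:R * c) - (x - y)) by field.
by rewrite mulr_ge0 ?invr_ge0 ?ler0n.
Qed.

Lemma ler_pair_rad_r (x y : C) : x \is Num.real -> y \is Num.real -> y <= pair_rad x y.
Proof. by move=> xR yR; rewrite pair_radC ler_pair_rad_l. Qed.

Lemma pair_rad_ge0 (x y : C) : 0 <= x -> 0 <= y -> 0 <= pair_rad x y.
Proof.
by move=> x0 y0; apply: le_trans x0 (ler_pair_rad_l (ger0_real x0) (ger0_real y0)).
Qed.

Lemma norm_root_le_pair_rad (x y z : C) : 0 <= x -> 0 <= y ->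
  (z - x) * (z - y) = c -> `|z| <= pair_rad x y.
Proof.
move=> x0 y0 zc; have [xR yR] := (ger0_real x0, ger0_real y0).
move/eqP: zc; rewrite -subr_eq0 -pair_rad_factor mulf_eq0 !subr_eq0.
case/orP => /eqP ->; first by rewrite ger0_norm ?pair_rad_ge0.
rewrite real_ler_norml ?rpredB ?rpredD ?ger0_real ?pair_rad_ge0 //.
by rewrite lerDr addr_ge0 //= lerBlDr lerD ?ler_pair_rad_l ?ler_pair_rad_r.
Qed.

Lemma pair_rad_le (x y b : C) : x \is Num.real -> y \is Num.real ->
  x <= b -> y <= b -> c <= (b - x) * (b - y) -> pair_rad x y <= b.
Proof.
(* b is not below the smaller root x + y - pair_rad x y, and the polynomial is
   nonnegative at b, so b is not below the larger root either. *)
move=> xR yR xb yb; rewrite -subr_ge0 -pair_rad_factor.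
set h := pair_rad x y; set h' := x + y - h.
have h'x : h' <= x by rewrite /h' lerBlDl addrC lerD2r ler_pair_rad_r.
have h'y : h' <= y by rewrite /h' lerBlDl lerD2r ler_pair_rad_l.
have [h'b | h'b] := eqVneq h' b.
  have xb' : x = b by apply/le_anti; rewrite xb -h'b h'x.
  have -> : h = x + y - h' by rewrite /h'; ring.
  by rewrite h'b xb' addrAC subrr add0r.
have h'b_gt : 0 < b - h' by rewrite subr_gt0 lt_neqAle h'b (le_trans h'y yb).
by rewrite pmulr_lge0 // subr_ge0.
Qed.

Lemma ler_pair_rad (x x' y y' : C) : 0 <= x -> x <= x' -> 0 <= y -> y <= y' ->
  pair_rad x y <= pair_rad x' y'.
Proof.
move=> x0 xx' y0 yy'; have [x'0 y'0] := (le_trans x0 xx', le_trans y0 yy').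
have [x'R y'R] := (ger0_real x'0, ger0_real y'0).
apply: pair_rad_le; rewrite ?ger0_real //.
- exact: le_trans xx' (ler_pair_rad_l x'R y'R).
- exact: le_trans yy' (ler_pair_rad_r x'R y'R).
rewrite -{1}(pair_rad_root x' y') ler_pM ?subr_ge0 ?lerB ?ler_pair_rad_l ?ler_pair_rad_r //.
Qed.

Lemma pair_rad_id (x : C) : pair_rad x x = x + sqrtC c.
Proof.
have sqrt4 : sqrtC (4%:R : C) = 2%:R by rewrite -(sqrCK (ler0n C 2)) -natrX.
rewrite /pair_rad subrr expr0n add0r sqrtCM ?nnegrE ?ler0n // sqrt4.
by field.
Qed.

End PairRadius.

Lemma eigen2_char_poly (R : idomainType) (a b c d z u v : R) :
  (u != 0) || (v != 0) -> z * u = a * u + b * v -> z * v = c * u + d * v ->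
  (z - a) * (z - d) = b * c.
Proof.
move=> uv0 eu ev; apply/eqP; rewrite -subr_eq0; apply: contraTT uv0 => P0.
have Pu : ((z - a) * (z - d) - b * c) * u = 0.
  transitivity ((z - d) * (z * u - (a * u + b * v)) + b * (z * v - (c * u + d * v))).
    by ring.
  by rewrite eu ev !subrr !mulr0 addr0.
have Pv : ((z - a) * (z - d) - b * c) * v = 0.
  transitivity ((z - a) * (z * v - (c * u + d * v)) + c * (z * u - (a * u + b * v))).
    by ring.
  by rewrite eu ev !subrr !mulr0 addr0.
move/eqP: Pu; move/eqP: Pv; rewrite !mulf_eq0 (negPf P0) /=.
by move=> /eqP -> /eqP ->; rewrite eqxx.
Qed.

Section PrincipalSpectra.
Variables (C : numClosedFieldType) (n N : nat) (q : 'I_N -> C) (f g : 'I_N -> 'cV[C]_n).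

Local Notation x i := (q i * inner (g i) (f i)).

Lemma spec_rad_frame_op1 i : 0 <= x i -> spec_rad (frame_op q f g [set i]) = x i.
Proof.
move=> x_ge0; apply: spec_radE => // [x0 | z].
  apply/frame_op_eigenvalueP => //; exists (fun=> 1).
    by exists i; rewrite ?set11 ?oner_neq0.
  by move=> m; rewrite inE big_set1 => /eqP ->; rewrite !mulr1.
move=> /frame_op_eigenvalueP H /H [u [m]]; rewrite inE => /eqP -> ui /(_ i (set11 i)).
rewrite big_set1 mulrAC => /(mulIf ui) ->.
by rewrite ger0_norm.
Qed.

Lemma spec_rad_frame_op2 i j (c : C) : i != j -> 0 < c -> 0 <= x i -> 0 <= x j ->
  q i * q j * inner (g j) (f i) * inner (g i) (f j) = c ->
  spec_rad (frame_op q f g [set i; j]) = pair_rad c (x i) (x j).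
Proof.
move=> ij c_gt0 xi_ge0 xj_ge0 hc; have c_ge0 := ltW c_gt0.
set A := q j * inner (g i) (f j); set B := q i * inner (g j) (f i).
have cAB : c = A * B by rewrite -hc /A /B; ring.
have sum2 (F : 'I_N -> C) : \sum_(k in [set i; j]) F k = F i + F j.
  by rewrite big_setU1 ?big_set1 // inE.
apply: spec_radE; first exact: pair_rad_ge0.
  set h := pair_rad c _ _ => h0.
  have A0 : A != 0 by apply: contraTneq c_gt0; rewrite cAB => ->; rewrite mul0r ltxx.
  apply/frame_op_eigenvalueP => //.
  exists (fun k => if k == i then A else h - x i); first by exists i; rewrite ?inE ?eqxx.
  have hroot := pair_rad_root c (x i) (x j); rewrite -/h in hroot.
  have ji : (j == i) = false by rewrite eq_sym (negPf ij).
  move=> m; rewrite !inE sum2 eqxx ji => /orP [] /eqP ->; rewrite ?eqxx ?ji.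
    by rewrite /A; ring.
  apply/eqP; rewrite -subr_eq0; apply/eqP.
  transitivity ((h - x i) * (h - x j) - A * B); first by rewrite /B; ring.
  by rewrite hroot cAB subrr.
move=> z /frame_op_eigenvalueP H /H [u [m m_ij um] eig].
apply: norm_root_le_pair_rad => //; rewrite cAB.
apply: (eigen2_char_poly (u := u i) (v := u j)).
- by move: m_ij um; rewrite !inE => /orP [] /eqP -> ->; rewrite ?orbT.
- by rewrite eig ?inE ?eqxx // sum2 /A; ring.
- by rewrite eig ?inE ?eqxx ?orbT // sum2 /B; ring.
Qed.

End PrincipalSpectra.

Lemma weight_ge0 (C : numClosedFieldType) n N (p : 'I_N -> C) i :
  is_prob_seq p -> 0 <= weight n p i.
Proof.
case=> p_bnd p_sum; have /andP [_ pi_le1] := p_bnd i.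
by rewrite /weight p_sum !mulr_ge0 ?invr_ge0 ?subr_ge0 ?ler0n.
Qed.

Section MaxSpectralRadius.
Variables (C : numClosedFieldType) (n N : nat) (q : 'I_N -> C) (f g : 'I_N -> 'cV[C]_n).

Definition max_spec_rad (m : nat) : C :=
  \big[Num.max/0]_(L : {set 'I_N} | #|L| == m) spec_rad (frame_op q f g L).

Lemma le_max_spec_rad m (L : {set 'I_N}) :
  #|L| = m -> spec_rad (frame_op q f g L) <= max_spec_rad m.
Proof.
move=> /eqP L_m; apply: (le_bigmax_nneg (P := fun L : {set 'I_N} => #|L| == m)) => //.
  by move=> *; apply: spec_rad_ge0.
exact: mem_index_enum.
Qed.

Lemma max_spec_rad_le m B : 0 <= B ->
  (forall L : {set 'I_N}, #|L| = m -> spec_rad (frame_op q f g L) <= B) ->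
  max_spec_rad m <= B.
Proof. by move=> B_ge0 L_le; apply: bigmax_le => // L /eqP /L_le. Qed.

Local Notation x i := (q i * inner (g i) (f i)).

Variable c : C.
Hypotheses (c_gt0 : 0 < c) (x_ge0 : forall i, 0 <= x i).
Hypothesis qq_gg_eq : forall i j, i != j ->
  q i * q j * inner (g j) (f i) * inner (g i) (f j) = c.

Lemma le_max_spec_rad1 i : x i <= max_spec_rad 1.
Proof. by rewrite -spec_rad_frame_op1 //; apply: le_max_spec_rad; rewrite cards1. Qed.

Lemma pair_rad_le_max_spec_rad2 i j : i != j -> pair_rad c (x i) (x j) <= max_spec_rad 2.
Proof.
move=> ij; rewrite -(spec_rad_frame_op2 ij) ?qq_gg_eq //.
by apply: le_max_spec_rad; rewrite cards2 ij.
Qed.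

Lemma max_spec_rad2_le B : 0 <= B ->
  (forall i j, i != j -> pair_rad c (x i) (x j) <= B) -> max_spec_rad 2 <= B.
Proof.
move=> B_ge0 pair_le; apply: max_spec_rad_le => // L /eqP /cards2P [i [j [ij ->]]].
by rewrite (spec_rad_frame_op2 (c := c) ij) ?qq_gg_eq // pair_le.
Qed.

Lemma max_spec_rad2_simple_top i0 M : x i0 = max_spec_rad 1 ->
  (forall i, i != i0 -> x i <= M) -> (exists2 j, j != i0 & x j = M) ->
  max_spec_rad 2 = pair_rad c (max_spec_rad 1) M.
Proof.
move=> xi0 x_le [j ji0 xj]; have c_ge0 := ltW c_gt0.
apply/eqP; rewrite eq_le; apply/andP; split.
  apply: max_spec_rad2_le => [|i k ik]; first by rewrite -xi0 -xj pair_rad_ge0.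
  have [ki0 | ki0] := eqVneq k i0.
    rewrite pair_radC // ler_pair_rad ?le_max_spec_rad1 ?x_le //.
    by rewrite -ki0.
  by rewrite ler_pair_rad ?le_max_spec_rad1 ?x_le.
by rewrite -xi0 -xj pair_rad_le_max_spec_rad2 // eq_sym.
Qed.

Lemma max_spec_rad2_double_top i0 i1 : i0 != i1 ->
  x i0 = max_spec_rad 1 -> x i1 = max_spec_rad 1 ->
  max_spec_rad 2 = max_spec_rad 1 + sqrtC c.
Proof.
move=> i01 xi0 xi1; have c_ge0 := ltW c_gt0; rewrite -pair_rad_id //.
apply/eqP; rewrite eq_le; apply/andP; split.
  apply: max_spec_rad2_le => [|i k ik]; first by rewrite -xi0 pair_rad_ge0.
  by rewrite ler_pair_rad ?le_max_spec_rad1.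
by rewrite -{1}xi0 -xi1 pair_rad_le_max_spec_rad2.
Qed.

End MaxSpectralRadius.

Theorem theorem3p2 (C : numClosedFieldType) (n N : nat)
  (p : 'I_N -> C) (f g : 'I_N -> 'cV[C]_n) (c : C) :
  (0 < n)%N -> (maxn n 2 <= N)%N ->
  is_frame f ->
  is_prob_seq p ->
  (forall i, \sum_j p j - p i != 0) ->
  is_dual f g ->
  (forall i, 0 <= inner (g i) (f i)) ->
  0 < c ->
  (forall i j, i != j ->
     weight n p i * weight n p j * inner (g j) (f i) * inner (g i) (f j) = c) ->
  let q := weight n p in
  let R1 := Rmp p 1 f g in
  let R2 := Rmp p 2 f g in
  let zeta := [set i | q i * inner (g i) (f i) == R1] in
  let M := \big[Num.max/0]_(i | i \notin zeta) (q i * inner (g i) (f i)) in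
  (#|zeta| = 1%N ->
     R2 = 2^-1 * (R1 + M + sqrtC ((R1 - M) ^+ 2 + 4%:R * c))) /\
  ((1 < #|zeta|)%N -> R2 = R1 + sqrtC c).
Proof.
move=> _ N_ge2 _ p_prob _ _ gf_ge0 c_gt0 qq_gg_eq q R1 R2 zeta M.
have x_ge0 i : 0 <= q i * inner (g i) (f i) by rewrite mulr_ge0 ?weight_ge0.
split.
  move/eqP/cards1P => [i0 zeta_i0].
  have /setP/(_ i0) := zeta_i0; rewrite !inE eqxx => /eqP xi0.
  have [j ji0] : exists j, j != i0.
    have : (1 < #|'I_N|)%N by rewrite card_ord (leq_trans _ N_ge2) // leq_maxr.
    case/card_gt1P => a [b [_ _ ab]].
    by case: (eqVneq a i0) => [<- | ai0]; [exists b; rewrite eq_sym | exists a].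
  have notin_zeta i : (i \notin zeta) = (i != i0) by rewrite zeta_i0 inE.
  have [j1 j1_notin Mj1] : exists2 j1, j1 \notin zeta & M = q j1 * inner (g j1) (f j1).
    by apply: bigmax_nneg_attained (mem_index_enum j) _; rewrite ?notin_zeta.
  apply: (max_spec_rad2_simple_top c_gt0 x_ge0 qq_gg_eq xi0).
    by move=> i; rewrite -notin_zeta => i_notin; apply: le_bigmax_nneg (mem_index_enum i) _.
  by exists j1; rewrite -?notin_zeta.
case/card_gt1P => i0 [i1 [zeta_i0 zeta_i1 i01]].
move: zeta_i0 zeta_i1; rewrite !inE => /eqP xi0 /eqP xi1.
exact: (max_spec_rad2_double_top c_gt0 x_ge0 qq_gg_eq i01 xi0 xi1).
Qed.
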